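(* Let $G$ be a tree on $n$ vertices $1,2,\ldots,n$ with edges $e_1,\ldots,e_{n-1}$ and signless Laplacian $Q$. Then the Moore-Penrose inverse $Q^+=[q^+_{i,j}]$ of $Q$ is given, for all vertices $i,j$, by $$q^+_{i,j}=\frac{(-1)^{d(i,j)}}{n^2}\left(\sum_{k:\ i,j\in G_H(e_k)}|G_T(e_k)|^2+\sum_{k:\ i,j\in G_T(e_k)}|G_H(e_k)|^2-\sum_{k:\ e_k\in P_{i-j}}|G_H(e_k)|\,|G_T(e_k)|\right).$$
   Context: The signless Laplacian is $Q=D+A$, where $A$ is the adjacency matrix and $D$ the diagonal degree matrix. Each edge is written $e_k=\{l_k,m_k\}$ with $l_k<m_k$. The head component $G_H(e_k)$ is the connected component of $G\setminus e_k$ containing $m_k$; the tail component $G_T(e_k)$ is the component containing $l_k$. $|X|$ is the number of vertices of $X$. $d(i,j)$ is the graph distance and $P_{i-j}$ is the (unique) path between $i$ and $j$ in $G$; ''$e_k\in P_{i-j}$'' means $e_k$ is an edge of this path. The Moore-Penrose inverse of a real matrix $A$ is the unique matrix $A^+$ with $AA^+A=A$, $A^+AA^+=A^+$, $(AA^+)^T=AA^+$, $(A^+A)^T=A^+A$. *)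

From mathcomp Require Import all_boot all_order all_algebra.
Set Implicit Arguments. Unset Strict Implicit. Unset Printing Implicit Defensive.
Import Order.TTheory GRing.Theory Num.Theory.
Local Open Scope ring_scope.

Definition simple_graph n (e : rel 'I_n) : Prop :=
  symmetric e /\ irreflexive e.

Definition connected_graph n (e : rel 'I_n) : Prop :=
  forall x y, connect e x y.

Definition acyclic n (e : rel 'I_n) : Prop :=
  forall (x : 'I_n) (p : seq 'I_n),
    path e x p -> uniq (x :: p) -> (2 <= size p)%N -> ~~ e (last x p) x.

Definition is_tree n (e : rel 'I_n) : Prop :=
  simple_graph e /\ connected_graph e /\ acyclic e.

(* edges e_k = {l_k, m_k} with l_k < m_k, represented as pairs (l, m) *)
Definition is_edge n (e : rel 'I_n) (p : 'I_n * 'I_n) : bool :=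
  ((p.1 < p.2)%N) && e p.1 p.2.

Definition del_edge n (e : rel 'I_n) (l m : 'I_n) : rel 'I_n :=
  fun x y => e x y && ~~ (((x == l) && (y == m)) || ((x == m) && (y == l))).

(* head component G_H(e_k): component of G \ e_k containing m_k *)
Definition head_comp n (e : rel 'I_n) (p : 'I_n * 'I_n) : {set 'I_n} :=
  [set v | connect (del_edge e p.1 p.2) p.2 v].
(* tail component G_T(e_k): component of G \ e_k containing l_k *)
Definition tail_comp n (e : rel 'I_n) (p : 'I_n * 'I_n) : {set 'I_n} :=
  [set v | connect (del_edge e p.1 p.2) p.1 v].

Definition walk_len n (e : rel 'I_n) (i j : 'I_n) (k : nat) : bool :=
  [exists t : k.-tuple 'I_n, path e i t && (last i t == j)].

(* graph distance d(i,j) (shortest walk length; n is a default never reached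
   in a connected graph) *)
Definition dist n (e : rel 'I_n) (i j : 'I_n) : nat :=
  \big[minn/n]_(k < n | walk_len e i j k) k.

(* edge {l,m} lies on the path P_{i-j}: it joins two consecutive vertices
   of a duplicate-free walk (path) from i to j *)
Definition on_path n (e : rel 'I_n) (i j : 'I_n) (p : 'I_n * 'I_n) : bool :=
  [exists k : 'I_n, exists t : k.-tuple 'I_n,
     [&& path e i t, last i t == j, uniq (i :: val t) &
        ((p \in zip (i :: val t) t) || ((p.2, p.1) \in zip (i :: val t) t))]].

Definition signless_laplacian (R : pzRingType) n (e : rel 'I_n) : 'M[R]_n :=
  \matrix_(i, j) (if i == j then (#|[set k | e i k]|)%:R else (e i j)%:R).

Definition is_MP_inverse (R : pzRingType) n (A X : 'M[R]_n) : Prop :=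
  [/\ A *m X *m A = A, X *m A *m X = X,
      (A *m X)^T = A *m X & (X *m A)^T = X *m A].

Definition tree_Qplus (R : fieldType) n (e : rel 'I_n) : 'M[R]_n :=
  \matrix_(i, j)
    ((-1) ^+ dist e i j / (n%:R ^+ 2) *
     (\sum_(p | is_edge e p && (i \in head_comp e p) && (j \in head_comp e p))
         (#|tail_comp e p|%:R ^+ 2)
      + \sum_(p | is_edge e p && (i \in tail_comp e p) && (j \in tail_comp e p))
         (#|head_comp e p|%:R ^+ 2)
      - \sum_(p | is_edge e p && on_path e i j p)
         (#|head_comp e p|%:R * #|tail_comp e p|%:R))).

From mathcomp Require Import all_boot all_order all_algebra ring.
Set Implicit Arguments. Unset Strict Implicit. Unset Printing Implicit Defensive.
Import Order.TTheory GRing.Theory Num.Theory.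

(* A tree is bipartite: let s be its +-1 colouring, so that (-1)^d(i,j) = s_i s_j,
   and for the edge e_k let u_k = n 1_{G_H(e_k)} - |G_H(e_k)| 1, a vector with zero
   sum.  Comparing the three sums case by case, the claimed matrix is
   P = S (sum_k u_k u_k^T) S / n^2 with S = diag(s).  At a vertex i the components
   of G \ iv, for the neighbours v of i, partition the other vertices, and
   u_k(i) - u_k(v) vanishes unless e_k = iv; this gives Q P = I - s s^T / n, the
   orthogonal projection onto s^perp.  As Q and P are symmetric and Q s = P s = 0,
   P satisfies the four Penrose equations, which determine it uniquely. *)

Lemma mem_zip (S T : eqType) (s : seq S) (t : seq T) x y :
  (x, y) \in zip s t -> (x \in s) && (y \in t).
Proof.
elim: s t => [|a s IH] [|b t] //=; rewrite !in_cons => /orP[/eqP[-> ->]|/IH].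
  by rewrite !eqxx.
by case/andP=> -> ->; rewrite !orbT.
Qed.

Lemma path_cut_edge (T : eqType) (r : rel T) (H : pred T) (x y : T) :
    (forall a b, r a b -> (H a != H b) = ((a, b) == (x, y)) || ((b, a) == (x, y))) ->
  forall i t, path r i t -> uniq (i :: t) ->
  ((x, y) \in zip (i :: t) t) || ((y, x) \in zip (i :: t) t) = (H i != H (last i t)).
Proof.
move=> cut i t; elim: t i => [|a t IH] i /=; first by rewrite eqxx.
case/andP=> ria pth /andP[iNat uq].
have -> : (H i != H (last a t)) = (H i != H a) (+) (H a != H (last a t)).
  by case: (H i) (H a) (H (last a t)) => [] [] [].
rewrite (cut _ _ ria) -(IH a pth uq) !in_cons [(x, y) == _]eq_sym.
have -> : ((y, x) == (i, a)) = ((a, i) == (x, y)).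
  by rewrite !xpair_eqE andbC (eq_sym y) (eq_sym x).
have notZ u v : (i == u) || (i == v) -> ((u, v) \in zip (a :: t) t) = false.
  move=> iuv; apply/negbTE/negP => /mem_zip/andP[ua vt].
  by case/orP: iuv iNat => /eqP ->; rewrite ?ua // in_cons vt orbT.
case: eqP => [[<- <-]|_]; first by rewrite !notZ ?eqxx ?orbT.
by case: eqP => [[<- <-]|_] //=; rewrite !notZ ?eqxx ?orbT.
Qed.

Lemma bigmin_leq (I : eqType) (r : seq I) (P : pred I) (F : I -> nat) m x :
  x \in r -> P x -> \big[minn/m]_(k <- r | P k) F k <= F x.
Proof.
elim: r => [|a r IH] //; rewrite in_cons big_cons => /orP[/eqP <- -> | x_r Px].
  exact: geq_minl.
by case: ifP => _; [apply: leq_trans (geq_minr _ _) _|]; apply: IH.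
Qed.

Lemma connect_stable (T : finType) (r : rel T) (S : pred T) x y :
  symmetric r -> (forall a b, r a b -> S a -> S b) -> connect r x y -> S x -> S y.
Proof.
move=> r_sym S_cl /(closed_connect (intro_closed (sym_connect_sym r_sym) S_cl)).
by rewrite !unfold_in => ->.
Qed.

Section MoorePenrose.

Local Open Scope ring_scope.

Variables (R : comPzRingType) (n : nat).
Implicit Types A X Y P : 'M[R]_n.

Lemma is_MP_inverse_sym A X P :
  A^T = A -> X^T = X -> P^T = P -> A *m X = P -> A *m P = A -> X *m P = X ->
  is_MP_inverse A X.
Proof.
move=> At Xt Pt AX AP XP.
have XA : X *m A = P by rewrite -[X]Xt -[A]At -trmx_mul AX Pt.
split; first by rewrite -mulmxA XA AP.
- by rewrite -mulmxA AX XP.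
- by rewrite AX Pt.
- by rewrite XA Pt.
Qed.

Lemma MP_inverse_unique A X Y : is_MP_inverse A X -> is_MP_inverse A Y -> X = Y.
Proof.
case=> [AXA XAX AXt XAt] [AYA YAY AYt YAt].
have AX_AY : (A *m X)^T *m (A *m Y)^T = (A *m X)^T.
  by rewrite -trmx_mul !mulmxA AYA.
have XA_YA : (X *m A)^T *m (Y *m A)^T = (Y *m A)^T.
  by rewrite -trmx_mul -!mulmxA [A *m (X *m A)]mulmxA AXA.
have -> : X = X *m A *m Y.
  by rewrite -{1}XAX -mulmxA -AXt -AX_AY AXt AYt !mulmxA XAX.
rewrite -{2}YAY -YAt -XA_YA XAt YAt -!mulmxA [Y *m (A *m Y)]mulmxA YAY.
by rewrite mulmxA.
Qed.

End MoorePenrose.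

Section SignlessLaplacian.

Local Open Scope ring_scope.

Lemma mul_signless_laplacian_entry (R : pzRingType) n (e : rel 'I_n) m
    (X : 'M[R]_(n, m)) i j :
  irreflexive e -> (signless_laplacian R e *m X) i j = \sum_(v | e i v) (X i j + X v j).
Proof.
move=> e_irr; rewrite mxE (bigD1 i) //= mxE eqxx big_split /= sumr_const.
congr (_ + _).
  by rewrite mulr_natl; congr (_ *+ _); apply: eq_card => v; rewrite inE.
rewrite big_mkcond [RHS]big_mkcond; apply: eq_bigr => v _; rewrite mxE.
have [->|vNi] := eqVneq v i; first by rewrite e_irr.
by case: (e i v); rewrite /= ?mul1r ?mul0r.
Qed.

Lemma trmx_signless_laplacian (R : pzRingType) n (e : rel 'I_n) :
  symmetric e -> (signless_laplacian R e)^T = signless_laplacian R e.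
Proof.
by move=> e_sym; apply/matrixP => i j; rewrite !mxE eq_sym e_sym; case: eqP => // ->.
Qed.

End SignlessLaplacian.

Section Tree.

Variables (n : nat) (e : rel 'I_n).
Hypotheses (e_sym : symmetric e) (e_irr : irreflexive e).
Hypotheses (e_conn : connected_graph e) (e_acyc : acyclic e).

(* For an edge (l, m): G_H = side l m and G_T = side m l. *)
Definition side (x y : 'I_n) : {set 'I_n} :=
  [set v | connect (del_edge e x y) y v].

Lemma del_edgeC x y : del_edge e x y =2 del_edge e y x.
Proof.
move=> a b; rewrite /del_edge.
by case: (a == x) (a == y) (b == x) (b == y) => [] [] [] [].
Qed.

Lemma del_edge_sym x y : symmetric (del_edge e x y).
Proof.
move=> a b; rewrite /del_edge e_sym.
by case: (a == x) (a == y) (b == x) (b == y) => [] [] [] [].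
Qed.

Lemma del_edge_sub x y : subrel (del_edge e x y) e.
Proof. by move=> a b /andP[]. Qed.

Lemma mem_side x y : y \in side x y.
Proof. by rewrite inE connect0. Qed.

Lemma side_exit x y a b :
  e a b -> a \in side x y -> b \notin side x y -> (a == y) && (b == x).
Proof.
rewrite !inE => eab ya yNb.
case del_ab: (del_edge e x y a b).
  by rewrite (connect_trans ya (connect1 del_ab)) in yNb.
move: del_ab; rewrite /del_edge eab /= => /negbFE /orP[/andP[_ /eqP b_y]|//].
by rewrite b_y connect0 in yNb.
Qed.

Lemma side_notin x y : e x y -> x \notin side x y.
Proof.
move=> exy; rewrite inE; apply/negP => /connectP[p pth].
case: (shortenP pth) => [[|z [|z' p']]] pth' uq _ /= last_x.
- by rewrite last_x e_irr in exy.
- by move: pth'; rewrite /= -last_x /del_edge !eqxx orbT andbF.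
- have := e_acyc (sub_path (@del_edge_sub x y) pth') uq isT.
  by rewrite /= -last_x exy.
Qed.

Lemma side_cover x y v : (v \in side x y) || (v \in side y x).
Proof.
pose S := [pred u | (u \in side x y) || (u \in side y x)].
apply: (connect_stable (S := S) e_sym _ (e_conn x v)); last by rewrite /= mem_side orbT.
move=> a b eab /orP[] a_in; rewrite /S /=.
  have [//|/(side_exit eab a_in)/andP[_ /eqP ->]] := boolP (b \in side x y).
  by rewrite mem_side orbT.
have [_|/(side_exit eab a_in)/andP[_ /eqP ->]] := boolP (b \in side y x).
  by rewrite orbT.
by rewrite mem_side.
Qed.

Lemma side_disj x y v : e x y -> v \in side x y -> v \notin side y x.
Proof.
move=> exy; rewrite !inE => yv; apply/negP => xv.
have := side_notin exy; rewrite inE (connect_trans yv) //.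
by rewrite (sym_connect_sym (@del_edge_sym x y)) (eq_connect (del_edgeC x y)).
Qed.

Lemma side_compl x y v : e x y -> (v \in side y x) = (v \notin side x y).
Proof.
move=> exy; have := side_cover x y v.
by case: (boolP (v \in side x y)) => [/(side_disj exy)/negbTE|].
Qed.

Lemma card_sides x y : e x y -> #|side x y| + #|side y x| = n.
Proof.
move=> exy; rewrite -[RHS]card_ord -(cardsC (side x y)); congr (_ + _).
by apply: eq_card => v; rewrite side_compl // !inE.
Qed.

Lemma side_sub_opposite i v w : e i v -> e i w -> v != w -> side i w \subset side v i.
Proof.
move=> eiv eiw vNw; have ewi : e w i by rewrite e_sym.
have w_in : w \in side v i.
  rewrite side_compl //; apply/negP => w_in.
  by have /andP[/eqP wv _] := side_exit ewi w_in (side_notin eiv); rewrite wv eqxx in vNw.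
apply/subsetP => j; rewrite [j \in side i w]inE => wj.
pose S := [pred a | (a \in side i w) && (a \in side v i)].
suff /andP[] : S j by [].
apply: (connect_stable (S := S) (@del_edge_sym i w) _ wj); last by rewrite /= mem_side.
move=> a b del_ab /andP[a_w a_v].
apply/andP; split; first by rewrite inE (connect_trans _ (connect1 del_ab)) // -inE.
apply: contraT => b_out.
have /andP[/eqP a_i _] := side_exit (del_edge_sub del_ab) a_v b_out.
by rewrite a_i (negbTE (side_notin eiw)) in a_w.
Qed.

Lemma side_neighbour i j : j != i -> exists2 v, e i v & j \in side i v.
Proof.
move=> jNi; pose S := [pred x | (x == i) || [exists v, e i v && (x \in side i v)]].
have : S j.
  apply: (connect_stable e_sym _ (e_conn i j)); last by rewrite /S /= eqxx.
  move=> a b eab /orP[/eqP a_i|/existsP[v /andP[eiv a_v]]]; rewrite /S /=.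
    by apply/orP; right; apply/existsP; exists b; rewrite -a_i eab mem_side.
  have [b_v|/(side_exit eab a_v)/andP[_ ->]] // := boolP (b \in side i v).
  by apply/orP; right; apply/existsP; exists v; rewrite eiv.
rewrite /S /= => /orP[/eqP j_i|/existsP[v /andP[eiv j_v]]]; last by exists v.
by rewrite j_i eqxx in jNi.
Qed.

Lemma side_neighbour_unique i j v w :
  e i v -> e i w -> j \in side i v -> j \in side i w -> v = w.
Proof.
move=> eiv eiw j_v j_w; apply/eqP/negPn/negP => vNw.
have := side_disj eiv j_v.
by rewrite (subsetP (side_sub_opposite eiv eiw vNw) _ j_w).
Qed.

Lemma sum_neighbour_mem_side i j : \sum_(v | e i v) (j \in side i v) = (j != i).
Proof.
have [->|jNi] := eqVneq j i.
  by rewrite big1 // => v eiv; rewrite (negbTE (side_notin eiv)).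
have [v eiv j_v] := side_neighbour jNi.
rewrite (bigD1 v) //= j_v big1 // => w /andP[eiw wNv].
apply/eqP; rewrite eqb0; apply: contra wNv => j_w.
by rewrite (side_neighbour_unique eiw eiv j_w j_v).
Qed.

Lemma sum_neighbour_card_side i : \sum_(v | e i v) #|side i v| = n.-1.
Proof.
under eq_bigr do rewrite -sum1_card big_mkcond /=.
rewrite exchange_big /=.
under eq_bigr do rewrite sum_neighbour_mem_side.
by rewrite -big_mkcond /= sum1_card cardC1 card_ord.
Qed.

Lemma head_compE p : head_comp e p = side p.1 p.2.
Proof. by []. Qed.

Lemma tail_compE p : tail_comp e p = side p.2 p.1.
Proof. by apply/setP => v; rewrite !inE (eq_connect (del_edgeC p.1 p.2)). Qed.

Lemma is_edge_adj p : is_edge e p -> e p.1 p.2.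
Proof. by case/andP. Qed.

Lemma mem_tail_comp p v : is_edge e p -> (v \in tail_comp e p) = (v \notin head_comp e p).
Proof. by move/is_edge_adj=> ep; rewrite tail_compE side_compl. Qed.

Definition edge_of (a b : 'I_n) : 'I_n * 'I_n := if a < b then (a, b) else (b, a).

Lemma is_edge_edge_of a b : e a b -> is_edge e (edge_of a b).
Proof.
rewrite /edge_of /is_edge; case: (ltngtP a b) => [ab|ba|/val_inj ab] eab /=.
- by rewrite ab.
- by rewrite ba e_sym.
- by rewrite ab e_irr in eab.
Qed.

Lemma is_edge_pairE p a b :
  is_edge e p -> ((a, b) == p) || ((b, a) == p) = (p == edge_of a b).
Proof.
case: p => x y /andP[/= xy _]; apply/idP/eqP.
  by case/orP=> /eqP[-> ->]; rewrite /edge_of ?xy // ltnNge (ltnW xy).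
by rewrite /edge_of; case: ifP => _ [-> ->]; rewrite eqxx ?orbT.
Qed.

Lemma head_comp_cut p a b : is_edge e p -> e a b ->
  ((a \in head_comp e p) != (b \in head_comp e p)) = ((a, b) == p) || ((b, a) == p).
Proof.
case: p => x y /andP[/= _ exy] eab; change (head_comp e (x, y)) with (side x y).
apply/idP/idP; last first.
  by case/orP=> /eqP[-> ->]; rewrite mem_side (negbTE (side_notin exy)).
have eba : e b a by rewrite e_sym.
case: (boolP (a \in side x y)) => a_in; case: (boolP (b \in side x y)) => b_in //= _.
  by have /andP[/eqP -> /eqP ->] := side_exit eab a_in b_in; rewrite eqxx orbT.
by have /andP[/eqP -> /eqP ->] := side_exit eba b_in a_in; rewrite eqxx.
Qed.

Lemma head_comp_edge_of p a b : is_edge e p -> e a b ->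
  ((a \in head_comp e p) != (b \in head_comp e p)) = (p == edge_of a b).
Proof. by move=> ep eab; rewrite head_comp_cut ?is_edge_pairE. Qed.

Lemma connect_uniq_path i j :
  exists t, [/\ path e i t, last i t = j, uniq (i :: t) & size t < n].
Proof.
case/connectP: (e_conn i j) => t pth ->; case: (shortenP pth) => s spth s_uniq _.
exists s; split=> //.
by have := max_card (mem (i :: s)); rewrite card_ord (card_uniqP s_uniq).
Qed.

Lemma on_pathE p i j : is_edge e p ->
  on_path e i j p = ((i \in head_comp e p) != (j \in head_comp e p)).
Proof.
move=> ep; have cut := head_comp_cut ep.
apply/idP/idP.
  case/existsP=> k /existsP[t /and4P[pth /eqP <- t_uniq]].
  by case: p ep cut => x y ep cut; rewrite (path_cut_edge cut).
case: (connect_uniq_path i j) => t [pth t_j t_uniq t_n] cross.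
apply/existsP; exists (Ordinal t_n); apply/existsP; exists (in_tuple t).
rewrite /= pth t_j eqxx; move: (t_uniq) => /= ->.
rewrite -t_j in cross; case: p ep cut cross => x y ep cut cross.
by rewrite /= (path_cut_edge cut pth t_uniq).
Qed.

Lemma walk_len_dist i j : walk_len e i j (dist e i j).
Proof.
case: (connect_uniq_path i j) => t [pth t_j _ t_n].
have dist_le : dist e i j <= size t.
  rewrite /dist -[size t]/(nat_of_ord (Ordinal t_n)).
  apply: bigmin_leq (mem_index_enum _) _.
  by apply/existsP; exists (in_tuple t); rewrite pth t_j eqxx.
(* the default value n of the minimum is never reached *)
have : (dist e i j == n) || walk_len e i j (dist e i j).
  apply: (big_ind (fun k => (k == n) || walk_len e i j k)) => [|k l|k ->];
    rewrite ?eqxx ?orbT //.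
  by rewrite /minn; case: ifP.
by case/orP=> // /eqP dist_n; rewrite dist_n leqNgt t_n in dist_le.
Qed.

Section Signature.

Variable R : comPzRingType.
Local Open Scope ring_scope.

Definition signature (v : 'I_n) : R :=
  \prod_(p | is_edge e p) (if v \in head_comp e p then 1 else -1).

Lemma sqr_signature v : signature v ^+ 2 = 1.
Proof.
rewrite expr2 -big_split /= big1 // => p _.
by case: ifP => _; rewrite ?mulr1 ?mulrNN ?mulr1.
Qed.

Lemma signature_edge a b : e a b -> signature b = - signature a.
Proof.
move=> eab; have ep := is_edge_edge_of eab.
rewrite /signature (bigD1 (edge_of a b)) // [in RHS](bigD1 (edge_of a b)) //= -mulNr.
congr (_ * _).
  have := head_comp_edge_of ep eab; rewrite eqxx.
  by case: (a \in _); case: (b \in _); rewrite ?opprK.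
apply: eq_bigr => p /andP[ep' pNab].
by have := head_comp_edge_of ep' eab; rewrite (negbTE pNab) => /negbFE/eqP ->.
Qed.

Lemma signature_path i t :
  path e i t -> signature (last i t) = (-1) ^+ size t * signature i.
Proof.
elim: t i => [|a t IH] i /=; first by rewrite mul1r.
by case/andP=> eia /IH ->; rewrite (signature_edge eia) exprS mulrN mulN1r mulNr.
Qed.

Lemma expN1_dist i j : (-1) ^+ dist e i j = signature i * signature j.
Proof.
case/existsP: (walk_len_dist i j) => t /andP[/signature_path + /eqP t_j].
by rewrite t_j size_tuple => ->; rewrite mulrCA -expr2 sqr_signature mulr1.
Qed.

End Signature.

Section Qplus.

Variable R : numFieldType.
Local Open Scope ring_scope.

Local Notation s := (signature R).
Local Notation Q := (signless_laplacian R e).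
Local Notation P := (tree_Qplus R e).

Lemma natr_ord_neq0 (i : 'I_n) : n%:R != 0 :> R.
Proof. by rewrite pnatr_eq0 -lt0n (leq_ltn_trans (leq0n i) (ltn_ord i)). Qed.

(* The vector u_k for the edge e_k = (x, y). *)
Definition side_vec (x y w : 'I_n) : R :=
  n%:R * (w \in side x y)%:R - #|side x y|%:R.

Definition cut_gram (i j : 'I_n) : R :=
  \sum_(p | is_edge e p) side_vec p.1 p.2 i * side_vec p.1 p.2 j.

Lemma natr_card_side x y : e x y -> #|side y x|%:R = n%:R - #|side x y|%:R :> R.
Proof. by move=> exy; apply/eqP; rewrite eq_sym subr_eq -natrD addnC card_sides. Qed.

Lemma side_vecC x y w : e x y -> side_vec y x w = - side_vec x y w.
Proof.
move=> exy; rewrite /side_vec side_compl // natr_card_side //.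
by case: (w \in side x y) => /=; ring.
Qed.

Lemma sum_side_vec x y : \sum_w side_vec x y w = 0.
Proof.
rewrite sumrB -mulr_sumr sumr_const card_ord -natr_sum.
have -> : (\sum_w (w \in side x y) = #|side x y|)%N.
  by rewrite -sum1_card [RHS]big_mkcond.
by rewrite mulr_natl subrr.
Qed.

Lemma tree_QplusE i j : P i j = s i * s j / n%:R ^+ 2 * cut_gram i j.
Proof.
rewrite mxE (expN1_dist R); congr (_ * _).
rewrite /cut_gram (big_mkcond (fun p => is_edge e p)) /=.
rewrite (big_mkcond (fun p => _ && _ && _)) (big_mkcond (fun p => _ && _ && _)).
rewrite (big_mkcond (fun p => _ && _)) -big_split -sumrB /=.
apply: eq_bigr => p _; case ep: (is_edge e p) => /=; last by rewrite !addr0 subr0.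
rewrite on_pathE // !mem_tail_comp // tail_compE natr_card_side ?is_edge_adj //.
rewrite /side_vec !head_compE.
by case: (i \in side p.1 p.2); case: (j \in side p.1 p.2) => /=; ring.
Qed.

Lemma cut_gram_edge i v j : e i v ->
  cut_gram i j - cut_gram v j = n%:R * (#|side i v|%:R - n%:R * (j \in side i v)%:R).
Proof.
move=> eiv; rewrite /cut_gram -sumrB (bigD1 (edge_of i v)) ?is_edge_edge_of //=.
rewrite big1 ?addr0 => [|p /andP[ep pNiv]]; last first.
  have := head_comp_edge_of ep eiv; rewrite (negbTE pNiv) !head_compE => /negbFE/eqP same.
  by rewrite /side_vec same subrr.
rewrite /edge_of; case: ifP => _ /=; rewrite ?(side_vecC _ eiv) /side_vec.
all: by rewrite mem_side (negbTE (side_notin eiv)) /=; ring.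
Qed.

Lemma tree_Qplus_edge i v j : e i v ->
  P i j + P v j = s i * s j / n%:R * (#|side i v|%:R - n%:R * (j \in side i v)%:R).
Proof.
move=> eiv; have n_neq0 := natr_ord_neq0 i.
rewrite !tree_QplusE (signature_edge R eiv).
transitivity (s i * s j / n%:R ^+ 2 * (cut_gram i j - cut_gram v j)); first by ring.
by rewrite cut_gram_edge //; field.
Qed.

Lemma trmx_tree_Qplus : P^T = P.
Proof.
apply/matrixP => i j; rewrite mxE !tree_QplusE [s j * _]mulrC /cut_gram.
by congr (_ * _); apply: eq_bigr => p _; rewrite mulrC.
Qed.

Definition sign_col : 'cV[R]_n := \col_v s v.

Definition sign_proj : 'M[R]_n := 1%:M - n%:R^-1 *: (sign_col *m sign_col^T).

Lemma sign_projE i j : sign_proj i j = (i == j)%:R - s i * s j / n%:R.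
Proof. by rewrite !mxE big_ord1 !mxE mulrC. Qed.

Lemma trmx_sign_proj : sign_proj^T = sign_proj.
Proof. by apply/matrixP => i j; rewrite mxE !sign_projE eq_sym [s j * _]mulrC. Qed.

Lemma mulmx_sign_proj m (X : 'M[R]_(m, n)) : X *m sign_col = 0 -> X *m sign_proj = X.
Proof.
move=> Xs; rewrite /sign_proj mulmxBr mulmx1 -scalemxAr mulmxA Xs mul0mx.
by rewrite scaler0 subr0.
Qed.

Lemma mul_Q_sign_col : Q *m sign_col = 0.
Proof.
apply/matrixP => i k; rewrite mul_signless_laplacian_entry // [RHS]mxE big1 // => v eiv.
by rewrite !mxE (signature_edge R eiv) addrN.
Qed.

Lemma mul_Qplus_sign_col : P *m sign_col = 0.
Proof.
apply/matrixP => i k; rewrite mxE [RHS]mxE.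
rewrite (eq_bigr (fun j => s i / n%:R ^+ 2 * cut_gram i j * s j ^+ 2)); last first.
  by move=> j _; rewrite [sign_col _ _]mxE tree_QplusE; ring.
under eq_bigr do rewrite sqr_signature mulr1.
rewrite -mulr_sumr /cut_gram exchange_big big1 ?mulr0 // => p _.
by rewrite -mulr_sumr sum_side_vec mulr0.
Qed.

Lemma mul_Q_Qplus : Q *m P = sign_proj.
Proof.
apply/matrixP => i j; rewrite mul_signless_laplacian_entry // sign_projE.
under eq_bigr => v eiv do rewrite tree_Qplus_edge //.
rewrite -mulr_sumr sumrB -mulr_sumr -!natr_sum.
rewrite sum_neighbour_card_side sum_neighbour_mem_side.
have n_neq0 := natr_ord_neq0 i.
rewrite -subn1 natrB ?(leq_ltn_trans (leq0n i) (ltn_ord i)) //.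
have [->|jNi] := eqVneq j i.
  by rewrite -expr2 sqr_signature /=; field.
by rewrite /=; field.
Qed.

End Qplus.

End Tree.

Theorem mainTheorem3 (R : realFieldType) (n : nat) (e : rel 'I_n) :
  is_tree e ->
  is_MP_inverse (signless_laplacian R e) (tree_Qplus R e) /\
  (forall X : 'M[R]_n,
     is_MP_inverse (signless_laplacian R e) X -> X = tree_Qplus R e).
Proof.
move=> [[e_sym e_irr] [e_conn e_acyc]].
have Qplus_MP : is_MP_inverse (signless_laplacian R e) (tree_Qplus R e).
  apply: (is_MP_inverse_sym (P := sign_proj e R)).
  - exact: trmx_signless_laplacian.
  - exact: trmx_tree_Qplus.
  - exact: trmx_sign_proj.
  - exact: mul_Q_Qplus.
  - exact/mulmx_sign_proj/mul_Q_sign_col.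
  - exact/mulmx_sign_proj/mul_Qplus_sign_col.
by split=> // X /MP_inverse_unique/(_ Qplus_MP).
Qed.
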